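(* Let $\sigma$ be a gradual semantics satisfying Stability, let $\mathcal{Q}=\langle\mathcal{A},\mathcal{R}^-,\mathcal{R}^+,\tau\rangle$ be a QBAF and $\alpha\in\mathcal{A}$. (1) If $\sigma(\alpha)>\tau(\alpha)$, then there exists $r\in\mathcal{R}$ with $\phi^\alpha_\sigma(r)>0$. (2) If $\sigma(\alpha)<\tau(\alpha)$, then there exists $r\in\mathcal{R}$ with $\phi^\alpha_\sigma(r)<0$.
   Context: A QBAF is a quadruple $\mathcal{Q}=\langle\mathcal{A},\mathcal{R}^-,\mathcal{R}^+,\tau\rangle$ with $\mathcal{A}$ a finite set of arguments, $\mathcal{R}^-,\mathcal{R}^+\subseteq\mathcal{A}\times\mathcal{A}$ disjoint attack and support relations, and $\tau:\mathcal{A}\to[0,1]$ base scores; $\mathcal{R}=\mathcal{R}^-\cup\mathcal{R}^+$. A gradual semantics $\sigma$ assigns to each QBAF a strength $\sigma(\alpha)\in[0,1]$ to every argument; it is assumed well-defined on every QBAF considered. For $\mathcal{S}\subseteq\mathcal{R}$, $\sigma_{\mathcal{S}}(\alpha)$ denotes the strength of $\alpha$ in $\langle\mathcal{A},\mathcal{R}^-\cap\mathcal{S},\mathcal{R}^+\cap\mathcal{S},\tau\rangle$. The RAE from $r\in\mathcal{R}$ to $\alpha$ under $\sigma$ is $$\phi^\alpha_\sigma(r)=\sum_{\mathcal{S}\subseteq\mathcal{R}\setminus\{r\}}\frac{(|\mathcal{R}|-|\mathcal{S}|-1)!\,|\mathcal{S}|!}{|\mathcal{R}|!}\big[\sigma_{\mathcal{S}\cup\{r\}}(\alpha)-\sigma_{\mathcal{S}}(\alpha)\big].$$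 $\sigma$ satisfies Stability if in every QBAF, every argument with no incoming edges has strength equal to its base score. *)

From HB Require Import structures.
From mathcomp Require Import all_boot all_order all_algebra.
Set Implicit Arguments. Unset Strict Implicit. Unset Printing Implicit Defensive.
Import Order.TTheory GRing.Theory Num.Theory.
Local Open Scope ring_scope.

Record qbaf (R : realFieldType) (A : finType) := QBAF {
  att : {set A * A};
  sup : {set A * A};
  tau : A -> R;
  att_sup_disj : att :&: sup = set0;
  tau_01 : forall a, 0 <= tau a <= 1 }.

Definition edges R A (Q : qbaf R A) : {set A * A} := att Q :|: sup Q.

Lemma restrict_disj R A (Q : qbaf R A) (S : {set A * A}) :
  (att Q :&: S) :&: (sup Q :&: S) = set0.
Proof.
apply/eqP; rewrite -subset0 -(att_sup_disj Q).
apply/subsetP => x; rewrite !inE.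
by case: (x \in att Q); case: (x \in sup Q); case: (x \in S).
Qed.

Definition restrict R A (Q : qbaf R A) (S : {set A * A}) : qbaf R A :=
  @QBAF R A (att Q :&: S) (sup Q :&: S) (tau Q) (restrict_disj Q S) (tau_01 Q).

Definition semantics (R : realFieldType) := forall A : finType, qbaf R A -> A -> R.

Definition gradual R (sigma : semantics R) : Prop :=
  forall (A : finType) (Q : qbaf R A) (a : A), 0 <= sigma A Q a <= 1.

Definition stability R (sigma : semantics R) : Prop :=
  forall (A : finType) (Q : qbaf R A) (a : A),
    (forall b : A, (b, a) \notin edges Q) -> sigma A Q a = tau Q a.

Definition RAE R (sigma : semantics R) A (Q : qbaf R A) (alpha : A) (r : A * A) : R :=
  \sum_(S in powerset (edges Q :\ r))
    ((#|edges Q| - #|S| - 1)`!%:R * (#|S|)`!%:R / (#|edges Q|)`!%:R) *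
    (sigma A (restrict Q (S :|: [set r])) alpha - sigma A (restrict Q S) alpha).

(* The RAE of an edge r is the Shapley value of r in the coalition game
   S |-> sigma_S(alpha) on the edge set.  Shapley values are efficient: their
   sum over all edges is sigma_R(alpha) - sigma_{}(alpha), which by Stability
   equals sigma(alpha) - tau(alpha).  A sum of positive (negative) total has a
   positive (negative) term. *)

From mathcomp Require Import all_boot all_order all_algebra.
From mathcomp Require Import zify ring.
Import Order.TTheory GRing.Theory Num.Theory.
Local Open Scope ring_scope.

Lemma sumr_indicator1 (R : pzSemiRingType) (I : finType) (P : {pred I})
    (i0 : I) (F : I -> R) :
  i0 \in P -> \sum_(i in P) (i == i0)%:R * F i = F i0.
Proof.
move=> Pi0; rewrite (bigD1 i0) //= eqxx mul1r big1 ?addr0 //.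
by move=> i /andP[_ /negbTE ->]; rewrite mul0r.
Qed.

Lemma sumr_gt0_exists (R : realDomainType) (I : finType) (P : {pred I})
    (F : I -> R) :
  0 < \sum_(i in P) F i -> exists2 i, i \in P & 0 < F i.
Proof.
move=> sum_gt0; have [/exists_inP //|] := boolP [exists i in P, 0 < F i].
rewrite negb_exists_in => /forall_inP F_le0.
suff : \sum_(i in P) F i <= 0 by rewrite leNgt sum_gt0.
by apply: sumr_le0 => i /F_le0; rewrite -leNgt.
Qed.

Lemma sumr_lt0_exists (R : realDomainType) (I : finType) (P : {pred I})
    (F : I -> R) :
  \sum_(i in P) F i < 0 -> exists2 i, i \in P & F i < 0.
Proof.
rewrite -oppr_gt0 -sumrN => /sumr_gt0_exists[i Pi].
by exists i; rewrite // -oppr_gt0.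
Qed.

Section ShapleyEfficiency.
Variables (R : realFieldType) (T : finType) (E : {set T}).

Definition shapley_weight (n s : nat) : R := (n - s - 1)`!%:R * s`!%:R / n`!%:R.

Lemma mulr_shapley_weight_pred n k : (0 < k)%N ->
  k%:R * shapley_weight n k.-1 = (n - k)`!%:R * k`!%:R / n`!%:R.
Proof.
case: k => // k _; rewrite /shapley_weight /= factS natrM.
have -> : (n - k - 1 = n - k.+1)%N by lia.
ring.
Qed.

Lemma mulr_shapley_weight n k : (k < n)%N ->
  (n - k)%:R * shapley_weight n k = (n - k)`!%:R * k`!%:R / n`!%:R.
Proof.
move=> lt_kn; rewrite /shapley_weight; set m := (n - k - 1)%N.
have -> : (n - k = m.+1)%N by rewrite /m; lia.
rewrite factS natrM; ring.
Qed.

(* The net coefficient of [v U], [#|U| = k], in the sum of all Shapley values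
   over an [n]-set: it vanishes unless [U] is empty or full. *)
Lemma shapley_weight_telescope n k : (k <= n)%N ->
  k%:R * shapley_weight n k.-1 - (n - k)%:R * shapley_weight n k =
  (k == n)%:R - (k == 0%N)%:R.
Proof.
move=> le_kn.
have nfact_neq0 : (n`!%:R : R) != 0 by rewrite pnatr_eq0 -lt0n fact_gt0.
case: k le_kn => [_|k le_kn].
  case: n nfact_neq0 => [|n] nfact_neq0; first by rewrite subnn !mul0r !subrr.
  by rewrite mul0r sub0r mulr_shapley_weight // subn0 fact0 mulr1 divff //= sub0r.
rewrite mulr_shapley_weight_pred // subr0.
have [->|ne_kn] := eqVneq k.+1 n.
  by rewrite subnn mul0r subr0 fact0 mul1r divff.
by rewrite mulr_shapley_weight ?subrr // ltn_neqAle ne_kn.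
Qed.

Lemma sum_powersetD1 (f : {set T} -> R) :
  \sum_(r in E) \sum_(S in powerset (E :\ r)) f S =
  \sum_(S in powerset E) (#|E| - #|S|)%:R * f S.
Proof.
rewrite (exchange_big_dep (mem (powerset E))) /=; last first.
  by move=> r S _; rewrite !powersetE subsetD1 => /andP[].
apply: eq_bigr => S; rewrite powersetE => sSE.
rewrite (eq_bigl (mem (E :\: S))); last first.
  by move=> r; rewrite /= powersetE subsetD1 sSE !inE andbC.
by rewrite sumr_const mulr_natl cardsD (setIidPr sSE).
Qed.

Lemma sum_powersetD1_setU1_in r (F : nat -> {set T} -> R) : r \in E ->
  \sum_(S in powerset (E :\ r)) F #|S| (S :|: [set r]) =
  \sum_(U in powerset E | r \in U) F #|U|.-1 U.
Proof.
move=> rE.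
rewrite [RHS](reindex_onto (fun S => S :|: [set r]) (fun U => U :\ r)); last first.
  move=> U /andP[_ rU]; apply/setP => x; rewrite !inE.
  by case: (eqVneq x r) => [->|]; rewrite ?rU ?orbT ?orbF.
apply: eq_big => S.
  rewrite !powersetE subsetD1 subUset sub1set rE andbT !inE eqxx orbT andbT.
  case: (S \subset E) => //=; case rS: (r \in S) => /=.
    apply/esym/negbTE/eqP => eq_S.
    by have := setD11 r (S :|: [set r]); rewrite eq_S rS.
  apply/esym/eqP/setP => x; rewrite !inE.
  by case: (eqVneq x r) => [->|]; rewrite ?rS ?orbF.
by rewrite powersetE subsetD1 => /andP[_ rS]; rewrite setUC cardsU1 rS.
Qed.

Lemma sum_powersetD1_setU1 (F : nat -> {set T} -> R) :
  \sum_(r in E) \sum_(S in powerset (E :\ r)) F #|S| (S :|: [set r]) =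
  \sum_(U in powerset E) #|U|%:R * F #|U|.-1 U.
Proof.
under eq_bigr => r rE do rewrite sum_powersetD1_setU1_in //.
rewrite (exchange_big_dep (mem (powerset E))) /=; last by move=> r U _ /andP[].
apply: eq_big => // U; rewrite powersetE => sUE.
rewrite (eq_bigl (mem U)); last first.
  by move=> r; rewrite /= sUE andTb andb_idl // => /(subsetP sUE).
by rewrite sumr_const mulr_natl.
Qed.

Definition shapley_value (v : {set T} -> R) (r : T) : R :=
  \sum_(S in powerset (E :\ r))
    shapley_weight #|E| #|S| * (v (S :|: [set r]) - v S).

Theorem shapley_efficiency (v : {set T} -> R) :
  \sum_(r in E) shapley_value v r = v E - v set0.
Proof.
rewrite /shapley_value.
under eq_bigr => r _ do (under eq_bigr => S _ do rewrite mulrBr; rewrite sumrB).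
rewrite sumrB (sum_powersetD1_setU1 (fun s U => shapley_weight #|E| s * v U)).
rewrite sum_powersetD1 -sumrB.
rewrite (eq_bigr (fun U => (U == E)%:R * v U - (U == set0)%:R * v U)); last first.
  move=> U; rewrite powersetE => sUE.
  rewrite !(mulrA _ (shapley_weight _ _)) -!mulrBl.
  rewrite shapley_weight_telescope ?subset_leq_card //.
  by rewrite cards_eq0 [U == E]eqEcard sUE eqn_leq subset_leq_card.
by rewrite sumrB !sumr_indicator1 // powersetE ?sub0set.
Qed.

End ShapleyEfficiency.

Lemma restrict_edges (R : realFieldType) (A : finType) (Q : qbaf R A) :
  restrict Q (edges Q) = Q.
Proof.
case: Q => att0 sup0 tau0 disj01 tau01; rewrite /restrict /edges /=.
move: (restrict_disj _ _) => /=.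
rewrite (setIidPl (subsetUl att0 sup0)) (setIidPl (subsetUr att0 sup0)) => disj.
by rewrite (eq_irrelevance disj disj01).
Qed.

Lemma sum_RAE (R : realFieldType) (sigma : semantics R) (A : finType)
    (Q : qbaf R A) (alpha : A) :
  stability sigma ->
  \sum_(r in edges Q) RAE sigma Q alpha r = sigma A Q alpha - tau Q alpha.
Proof.
move=> stab.
rewrite (@shapley_efficiency _ _ _ (fun S => sigma A (restrict Q S) alpha)).
rewrite restrict_edges.
by rewrite (stab _ (restrict Q set0)) // => b; rewrite /edges !inE !andbF.
Qed.

Theorem corollary1 (R : realFieldType) (sigma : semantics R)
  (Hgrad : gradual sigma) (Hstab : stability sigma)
  (A : finType) (Q : qbaf R A) (alpha : A) :
  (tau Q alpha < sigma A Q alpha ->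
     exists2 r, r \in edges Q & 0 < RAE sigma Q alpha r) /\
  (sigma A Q alpha < tau Q alpha ->
     exists2 r, r \in edges Q & RAE sigma Q alpha r < 0).
Proof.
split=> ineq.
  by apply: sumr_gt0_exists; rewrite sum_RAE // subr_gt0.
by apply: sumr_lt0_exists; rewrite sum_RAE // subr_lt0.
Qed.
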